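(* An agent $A$ holding at least $\max\bigl(C^{C}_{\mathrm{signature}},\; C^{C}_{\mathrm{data}} + \max(C^{C}_{\mathrm{validity}}, C^{C}_{\mathrm{integrity}})\bigr)$ tokens and knowing the transactions in all confirmed batches can get any illegal signed batch tag discarded before confirmation.
   Context: Setting: L2 blockchain with an arranger posting signed batch tags $t=(\mathit{batchId},h,\sigma)$ in L1, $h$ the Merkle root hash of batch $b$, $\sigma$ a combined signature; stakers stake at least $s$ tokens on tags; tags are confirmed after a delay unless discarded by a challenge. Legality: (B1) $\sigma$ has at least $f+1$ valid arranger signatures; (B2) only valid transactions; (B3) no duplicates; (B4) no transaction from a previously confirmed batch. Challenge types $x\in\{\mathrm{data},\mathrm{signature},\mathrm{validity},\mathrm{integrity}\}$ (data availability challenge reveals the batch's transactions or removes the tag; signature challenge checks B1; validity challenge B2; integrity challenges B3, B4). $C^{C}_{x}$ denotes the client (challenger) cost for playing challenge $x$, $R^{C}_{x}$ the challenger reward for winning it, $C^{S}_{x}$ the staker cost. Assumed relations: $C^{C}_x \ll R^{C}_x$; $C^{C}_x > C^{S}_x$ (with $C^{S}_{\mathrm{signature}}=0$); $R^{C}_x < s$ for data, validity, integrity; $R^{C}_{\mathrm{signature}}$ is less than the sum of stakes on the tag; the winner of a challenge receives its reward from the loser's stake. *)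

From HB Require Import structures.
From mathcomp Require Import all_boot all_order all_algebra.
Set Implicit Arguments. Unset Strict Implicit. Unset Printing Implicit Defensive.
Import Order.TTheory GRing.Theory Num.Theory.
Local Open Scope ring_scope.

Record btag (Hash Arr Sig : Type) := BTag {
  batchId : nat;
  troot : Hash;
  tsig : seq (Arr * Sig) }.

Section Legality.
Variables (Tx : eqType) (Arr : finType) (Sig Hash : Type).
Variable valid : pred Tx.
Variable sigv : Arr -> Hash -> Sig -> bool.
Variable f : nat.

Definition nvalid_sigs (t : btag Hash Arr Sig) : nat :=
  #|[set a : Arr | has (fun p => (p.1 == a) && sigv a (troot t) p.2) (tsig t)]|.

Definition B1 (t : btag Hash Arr Sig) : bool := (f.+1 <= nvalid_sigs t)%N.
Definition B2 (b : seq Tx) : bool := all valid b.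
Definition B3 (b : seq Tx) : bool := uniq b.
(* (B4): conf = transaction lists of previously confirmed batches *)
Definition in_confirmed (conf : seq (seq Tx)) (x : Tx) : bool :=
  has (fun cb => x \in cb) conf.
Definition B4 (conf : seq (seq Tx)) (b : seq Tx) : bool :=
  all (fun x => ~~ in_confirmed conf x) b.

Definition legal (conf : seq (seq Tx)) (t : btag Hash Arr Sig) (b : seq Tx) : bool :=
  [&& B1 t, B2 b, B3 b & B4 conf b].
End Legality.

Inductive ckind := CData | CSignature | CValidity | CIntegrity.

Inductive move :=
  | MData
  | MSignature
  | MValidity of nat
  | MIntegrityDup of nat & nat
  | MIntegrityConf of nat.

Definition kind_of (m : move) : ckind :=
  match m with
  | MData => CData
  | MSignature => CSignature
  | MValidity _ => CValidity
  | MIntegrityDup _ _ | MIntegrityConf _ => CIntegrity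
  end.

Record gstate (R : Type) (Tx : Type) := GState {
  bal : R;
  known : option (seq Tx);
  disc : bool }.

Section Game.
Variables (R : realFieldType) (Tx : eqType) (Arr : finType) (Sig Hash : Type).
Variable valid : pred Tx.
Variable sigv : Arr -> Hash -> Sig -> bool.
Variable f : nat.
Variables (cC rC : ckind -> R).   (* challenger costs C^C_x and rewards R^C_x *)

(* A challenger strategy: given the public tag, the transactions of all
   confirmed batches, its current balance and the batch contents if revealed,
   it either plays a challenge (Some m) or waits (None). It does NOT see the
   hidden batch b. *)
Definition strategy :=
  btag Hash Arr Sig -> seq (seq Tx) -> R -> option (seq Tx) -> option move.

(* A staker behaviour for data availability challenges: at step k, true
   means the stakers reveal the batch, false means they withhold it. *)
Definition staker_beh := nat -> bool.

Variables (strat : strategy) (stk : staker_beh).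
Variables (t : btag Hash Arr Sig) (conf : seq (seq Tx)) (b : seq Tx).

Definition wins_content (m : move) : bool :=
  match m with
  | MValidity i => if onth b i is Some x then ~~ valid x else false
  | MIntegrityDup i j => [&& (i < j)%N, (j < size b)%N & onth b i == onth b j]
  | MIntegrityConf i => if onth b i is Some x then in_confirmed conf x else false
  | _ => false
  end.

Definition step (k : nat) (st : gstate R Tx) : gstate R Tx :=
  if disc st then st else
  match strat t conf (bal st) (known st) with
  | None => st
  | Some m =>
    let x := kind_of m in
    if bal st < cC x then st else
    let bal' := bal st - cC x in
    match m with
    | MSignature =>
        if B1 sigv f t then GState bal' (known st) false
        else GState (bal' + rC x) (known st) true
    | MData =>
        if stk k then GState bal' (Some b) false
        else GState (bal' + rC x) (known st) true
    | _ =>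
        if wins_content m then GState (bal' + rC x) (known st) true
        else GState bal' (known st) false
    end
  end.

Fixpoint run (n : nat) (st : gstate R Tx) : gstate R Tx :=
  match n with
  | 0 => st
  | n'.+1 => step n' (run n' st)
  end.
End Game.

(** The challenger's strategy: if the signature share is insufficient, play a
    signature challenge (affordable by the first term of the bound).
    Otherwise play a data availability challenge: the stakers either withhold
    the batch, and the tag is removed, or reveal it. A revealed illegal batch
    with valid signatures violates B2, B3 or B4, and each violation is
    witnessed by a validity or integrity challenge that the challenger finds
    by enumerating all positions; the remaining balance covers its cost. *)
From Pilot Require Import Defs.
From HB Require Import structures.
From mathcomp Require Import all_boot all_order all_algebra.
Set Implicit Arguments. Unset Strict Implicit. Unset Printing Implicit Defensive.
Import Order.TTheory GRing.Theory Num.Theory.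
Local Open Scope ring_scope.

Lemma ohead_filter_has (T : Type) (p q : pred T) (s : seq T) :
  all q s -> has p s -> exists2 x, ohead (filter p s) = Some x & p x && q x.
Proof.
elim: s => //= x s IH /andP[qx qs]; case: ifP => [px _ | _ /(IH qs)//].
by exists x; rewrite ?px.
Qed.

Lemma onth_lt_size {T : Type} (x0 : T) (s : seq T) i :
  (i < size s)%N -> onth s i = Some (nth x0 s i).
Proof. by move=> ltis; rewrite onthE (nth_map x0). Qed.

Lemma not_uniq_onth (T : eqType) (s : seq T) :
  ~~ uniq s -> exists i j, [/\ (i < j)%N, (j < size s)%N & onth s i = onth s j].
Proof.
case: s => [//|x0 s'] /(uniqPn x0)[i [j [ltij ltj eqij]]].
exists i, j; split=> //.
by rewrite !(onth_lt_size x0) ?eqij //; apply: ltn_trans ltj.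
Qed.

Definition content_kind (x : ckind) : bool :=
  match x with CValidity | CIntegrity => true | _ => false end.

Definition content_moves (n : nat) : seq move :=
  [seq MValidity i | i <- iota 0 n] ++
  [seq MIntegrityDup i j | i <- iota 0 n, j <- iota 0 n] ++
  [seq MIntegrityConf i | i <- iota 0 n].

Lemma all_content_kind n : all (content_kind \o kind_of) (content_moves n).
Proof.
rewrite !all_cat !all_map; apply/and3P; split; [exact: all_predT | | exact: all_predT].
by apply/all_allpairsP.
Qed.

Section ContentChallenges.
Variables (Tx : eqType) (valid : pred Tx) (conf : seq (seq Tx)) (b : seq Tx).

Local Notation wins := (wins_content valid conf b).

Lemma has_invalid_move : ~~ B2 valid b -> has wins (content_moves (size b)).
Proof.
rewrite /B2 -has_predC => /hasP[x xb invx].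
have [i bi] := onthP xb.
rewrite has_cat has_map; apply/orP; left; apply/hasP; exists i => /=.
  by rewrite mem_iota -onthTE bi.
by rewrite bi.
Qed.

Lemma has_duplicate_move : ~~ B3 b -> has wins (content_moves (size b)).
Proof.
case/not_uniq_onth=> i [j [ltij ltj eqij]].
rewrite !has_cat; apply/orP; right; apply/orP; left.
rewrite -[has _ _]negbK -all_predC; apply/negP=> /all_allpairsP/(_ i j).
by rewrite !mem_iota /= ltij ltj eqij eqxx add0n (ltn_trans ltij ltj); move/(_ isT isT).
Qed.

Lemma has_confirmed_move : ~~ B4 conf b -> has wins (content_moves (size b)).
Proof.
rewrite /B4 -has_predC => /hasP[x xb /negPn confx].
have [i bi] := onthP xb.
rewrite !has_cat; apply/orP; right; apply/orP; right.
rewrite has_map; apply/hasP; exists i => /=; first by rewrite mem_iota -onthTE bi.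
by rewrite bi.
Qed.

Lemma has_winning_content_move :
  ~~ [&& B2 valid b, B3 b & B4 conf b] -> has wins (content_moves (size b)).
Proof.
by case/nandP=> [/has_invalid_move | /nandP[/has_duplicate_move | /has_confirmed_move]].
Qed.

End ContentChallenges.

Section Play.
Variables (R : realFieldType) (Tx : eqType) (Arr : finType) (Sig Hash : Type).
Variables (valid : pred Tx) (sigv : Arr -> Hash -> Sig -> bool) (f : nat).
Variables (cC rC : ckind -> R) (strat : strategy R Tx Arr Sig Hash).
Variables (stk : staker_beh) (t : btag Hash Arr Sig).
Variables (conf : seq (seq Tx)) (b : seq Tx).

Local Notation step := (step valid sigv f cC rC strat stk t conf b).

Definition challenge_won (k : nat) (m : move) : bool :=
  match m with
  | MSignature => ~~ B1 sigv f t
  | MData => ~~ stk k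
  | _ => wins_content valid conf b m
  end.

Lemma step_discards k st m :
  ~~ disc st -> strat t conf (bal st) (known st) = Some m ->
  cC (kind_of m) <= bal st -> challenge_won k m -> disc (step k st).
Proof.
rewrite /Defs.step => /negbTE-> -> affordable; rewrite ltNge affordable /=.
by case: m {affordable} => [||i|i j|i] /= won; rewrite ?(negbTE won) ?won.
Qed.

Lemma step_reveals k st :
  ~~ disc st -> strat t conf (bal st) (known st) = Some MData ->
  cC CData <= bal st -> stk k ->
  step k st = GState (bal st - cC CData) (Some b) false.
Proof.
rewrite /Defs.step => /negbTE-> -> affordable revealed.
by rewrite ltNge affordable /= revealed.
Qed.

End Play.

(** The strategy only sees the hidden batch through a reveal [Some b']. *)
Definition challenge_strategy {R : realFieldType} {Tx : eqType} {Arr : finType}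
    {Sig Hash : Type} (valid : pred Tx) (sigv : Arr -> Hash -> Sig -> bool)
    (f : nat) : strategy R Tx Arr Sig Hash :=
  fun t conf _ revealed =>
    match revealed with
    | None => Some (if B1 sigv f t then MData else MSignature)
    | Some b' => ohead (filter (wins_content valid conf b') (content_moves (size b')))
    end.

Theorem mainTheorem5 (R : realFieldType) (Tx : eqType) (Arr : finType)
    (Sig Hash : Type) (valid : pred Tx) (sigv : Arr -> Hash -> Sig -> bool)
    (f : nat) (mroot : seq Tx -> Hash)
    (cC cS rC : ckind -> R) (s : R)
    (HcS0 : forall x, 0 <= cS x)
    (HcSsig : cS CSignature = 0)
    (HcCS : forall x, cS x < cC x)
    (HcCR : forall x, cC x < rC x)
    (HRs : forall x, x <> CSignature -> rC x < s) :
  exists strat : strategy R Tx Arr Sig Hash,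
  forall (t : btag Hash Arr Sig) (conf : seq (seq Tx)) (b : seq Tx)
         (stakes : seq R) (stk : staker_beh) (bal0 : R),
    mroot b = troot t ->
    all (fun v => s <= v) stakes ->
    rC CSignature < \sum_(v <- stakes) v ->
    Num.max (cC CSignature) (cC CData + Num.max (cC CValidity) (cC CIntegrity))
      <= bal0 ->
    ~~ legal valid sigv f conf t b ->
    exists n, disc (run valid sigv f cC rC strat stk t conf b n
                        (GState bal0 None false)).
Proof.
exists (challenge_strategy valid sigv f) => t conf b _ stk bal0 _ _ _ + illegal.
rewrite ge_max => /andP[sig_bal data_content_bal].
have cC_gt0 x : 0 < cC x := le_lt_trans (HcS0 x) (HcCS x).
have data_bal : cC CData <= bal0.
  by apply: le_trans data_content_bal; rewrite lerDl le_max ltW.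
have [sig_ok | sig_bad] := boolP (B1 sigv f t); last first.
  by exists 1%N; apply: (step_discards (m := MSignature) _); rewrite //= (negbTE sig_bad).
have [revealed | withheld] := boolP (stk 0%N); last first.
  by exists 1%N; apply: (step_discards (m := MData) _); rewrite //= sig_ok.
have content_bad : ~~ [&& B2 valid b, B3 b & B4 conf b].
  by move: illegal; rewrite /legal sig_ok.
have [m pick_m /andP[wins_m kind_m]] :=
  ohead_filter_has (all_content_kind (size b)) (has_winning_content_move content_bad).
have content_cost : cC (kind_of m) <= Num.max (cC CValidity) (cC CIntegrity).
  by move: kind_m => /=; case: (kind_of m) => // _; rewrite le_max lexx ?orbT.
exists 2%N; apply: (step_discards (m := m) _); rewrite ?step_reveals //= ?sig_ok //.
- by rewrite lerBrDl (le_trans _ data_content_bal) // lerD2l.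
- by case: m {pick_m kind_m content_cost} wins_m.
Qed.
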